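(* In each calculus of the family $\mathsf{CL}^*$ the cut rule is admissible: for every relational atom or labelled formula $\mathcal{F}$, if $\Gamma\Rightarrow\Delta,\mathcal{F}$ and $\mathcal{F},\Gamma'\Rightarrow\Delta'$ are derivable, then $\Gamma,\Gamma'\Rightarrow\Delta,\Delta'$ is derivable.
   Context: Syntax: world labels $x,y,z,\dots$; neighbourhood labels $a,b,c,\dots$, including $\{x\}$ for each world label $x$. Relational atoms: $a\in N(x)$, $x\in a$, $a\subseteq b$. Labelled formulas: relational atoms, $x:A$, $a\Vdash^{\exists}A$, $a\Vdash^{\forall}A$, $x\Vdash_aA|B$ for formulas of $\mathcal{L}::=p\mid\bot\mid A\wedge B\mid A\lor B\mid A\to B\mid A>B$. Sequents $\Gamma\Rightarrow\Delta$: multisets, relational atoms only in the antecedent. Rules of $\mathsf{CL}$ (''(u!)'': $u$ not in conclusion; premisses / conclusion): initial sequents $x:p,\Gamma\Rightarrow\Delta,x:p$ ($p$ atomic), $x:\bot,\Gamma\Rightarrow\Delta$; G3 rules for $\wedge,\vee,\to$ on $x:A$; L$\forall$: $x:A,x\in a,a\Vdash^\forall A,\Gamma\Rightarrow\Delta$ / $x\in a,a\Vdash^\forall A,\Gamma\Rightarrow\Delta$; R$\forall$(x!): $x\in a,\Gamma\Rightarrow\Delta,x:A$ / $\Gamma\Rightarrow\Delta,a\Vdash^\forall A$; L$\exists$(x!): $x\in a,x:A,\Gamma\Rightarrow\Delta$ / $a\Vdash^\exists A,\Gamma\Rightarrow\Delta$; R$\exists$: $x\in a,\Gamma\Rightarrow\Delta,x:A,a\Vdash^\exists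 A$ / $x\in a,\Gamma\Rightarrow\Delta,a\Vdash^\exists A$; R$>$(a!): $a\in N(x),a\Vdash^\exists A,\Gamma\Rightarrow\Delta,x\Vdash_aA|B$ / $\Gamma\Rightarrow\Delta,x:A>B$; L$>$: $a\in N(x),x:A>B,\Gamma\Rightarrow\Delta,a\Vdash^\exists A$ and $x\Vdash_aA|B,a\in N(x),x:A>B,\Gamma\Rightarrow\Delta$ / $a\in N(x),x:A>B,\Gamma\Rightarrow\Delta$; R$|$: $c\in N(x),c\subseteq a,\Gamma\Rightarrow\Delta,x\Vdash_aA|B,c\Vdash^\exists A$ and $c\in N(x),c\subseteq a,\Gamma\Rightarrow\Delta,x\Vdash_aA|B,c\Vdash^\forall A\to B$ / $c\in N(x),c\subseteq a,\Gamma\Rightarrow\Delta,x\Vdash_aA|B$; L$|$(c!): $c\in N(x),c\subseteq a,c\Vdash^\exists A,c\Vdash^\forall A\to B,\Gamma\Rightarrow\Delta$ / $x\Vdash_aA|B,\Gamma\Rightarrow\Delta$; Ref: $a\subseteq a,\Gamma\Rightarrow\Delta$ / $\Gamma\Rightarrow\Delta$; Tr: $c\subseteq a,c\subseteq b,b\subseteq a,\Gamma\Rightarrow\Delta$ / $c\subseteq b,b\subseteq a,\Gamma\Rightarrow\Delta$; L$\subseteq$: $x\in a,a\subseteq b,x\in b,\Gamma\Rightarrow\Delta$ / $x\in a,a\subseteq b,\Gamma\Rightarrow\Delta$. Extension rules: N(a!): $a\in N(x),\Gamma\Rightarrow\Delta$ / $\Gamma\Rightarrow\Delta$; 0(y!):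 $y\in a,a\in N(x),\Gamma\Rightarrow\Delta$ / $a\in N(x),\Gamma\Rightarrow\Delta$; T(a!): $x\in a,a\in N(x),\Gamma\Rightarrow\Delta$ / $\Gamma\Rightarrow\Delta$; W: $x\in a,a\in N(x),\Gamma\Rightarrow\Delta$ / $a\in N(x),\Gamma\Rightarrow\Delta$; Single: $x\in\{x\},\{x\}\in N(x),\Gamma\Rightarrow\Delta$ / $\{x\}\in N(x),\Gamma\Rightarrow\Delta$; C: $\{x\}\in N(x),\{x\}\subseteq a,a\in N(x),\Gamma\Rightarrow\Delta$ / $a\in N(x),\Gamma\Rightarrow\Delta$; Repl$_1$: $y\in\{x\},At(x),At(y),\Gamma\Rightarrow\Delta$ / $y\in\{x\},At(x),\Gamma\Rightarrow\Delta$; Repl$_2$: same premiss / $y\in\{x\},At(y),\Gamma\Rightarrow\Delta$, with $At(x)$ among $x:P$ ($P$ atomic), $x\in a$, $a\in N(x)$, $x\in\{z\}$; U$_1$(c!): $z\in c,c\in N(x),a\in N(x),y\in a,b\in N(y),z\in b,\Gamma\Rightarrow\Delta$ / $a\in N(x),y\in a,b\in N(y),z\in b,\Gamma\Rightarrow\Delta$; U$_2$(c!): $z\in c,c\in N(y),a\in N(x),y\in a,b\in N(x),z\in b,\Gamma\Rightarrow\Delta$ / $a\in N(x),y\in a,b\in N(x),z\in b,\Gamma\Rightarrow\Delta$; A$_1$: $b\in N(y),a\in N(x),y\in a,b\in N(x),\Gamma\Rightarrow\Delta$ / $a\in N(x),y\in a,b\in N(x),\Gamma\Rightarrow\Delta$;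 A$_2$: $b\in N(x),a\in N(x),y\in a,b\in N(y),\Gamma\Rightarrow\Delta$ / $a\in N(x),y\in a,b\in N(y),\Gamma\Rightarrow\Delta$; plus contracted instances of U$_1$,U$_2$,A$_1$. Family $\mathsf{CL}^*$: $\mathsf{CL}$; $\mathsf{CL}^N=\mathsf{CL}+$N,0; $\mathsf{CL}^T=\mathsf{CL}^N+$T; $\mathsf{CL}^W=\mathsf{CL}^T+$W; $\mathsf{CL}^C=\mathsf{CL}^W+$C,Single,Repl$_1$,Repl$_2$; $\mathsf{CL}^U=\mathsf{CL}+$U$_1$,U$_2$; $\mathsf{CL}^{NU},\dots,\mathsf{CL}^{CU}$ = $\mathsf{CL}^N,\dots,\mathsf{CL}^C$ + U$_1$,U$_2$; $\mathsf{CL}^A=\mathsf{CL}+$A$_1$,A$_2$; $\mathsf{CL}^{NA},\dots,\mathsf{CL}^{CA}$ = $\mathsf{CL}^N,\dots,\mathsf{CL}^C$ + A$_1$,A$_2$. *)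

From Stdlib Require Import List Permutation.
Import ListNotations.

Inductive form : Type :=
| Atom (p : nat)
| Bot
| And (A B : form)
| Or (A B : form)
| Imp (A B : form)
| Cond (A B : form).

(* World labels are natural numbers; neighbourhood labels are either
   variables a,b,c,... or singletons {x} of a world label x. *)
Definition wlab := nat.
Inductive nlab : Type :=
| NV (n : nat)
| NS (x : wlab).

(* Relational atoms and labelled formulas (one syntactic category). *)
Inductive lform : Type :=
| LN (a : nlab) (x : wlab)                  (* a ∈ N(x) *)
| LIn (x : wlab) (a : nlab)
| LSub (a b : nlab)
| LW (x : wlab) (A : form)                  (* x : A *)
| LEx (a : nlab) (A : form)                 (* a ⊩∃ A *)
| LAll (a : nlab) (A : form)                (* a ⊩∀ A *)
| LCond (x : wlab) (a : nlab) (A B : form). (* x ⊩_a A | B *)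

Definition nlab_has_w (y : wlab) (a : nlab) : Prop := a = NS y.

Definition wocc (y : wlab) (F : lform) : Prop :=
  match F with
  | LN a x => nlab_has_w y a \/ x = y
  | LIn x a => x = y \/ nlab_has_w y a
  | LSub a b => nlab_has_w y a \/ nlab_has_w y b
  | LW x _ => x = y
  | LEx a _ => nlab_has_w y a
  | LAll a _ => nlab_has_w y a
  | LCond x a _ _ => x = y \/ nlab_has_w y a
  end.

Definition nocc (n : nat) (F : lform) : Prop :=
  match F with
  | LN a _ => a = NV n
  | LIn _ a => a = NV n
  | LSub a b => a = NV n \/ b = NV n
  | LW _ _ => False
  | LEx a _ => a = NV n
  | LAll a _ => a = NV n
  | LCond _ a _ _ => a = NV n
  end.

Definition wfresh (y : wlab) (l : list lform) : Prop :=
  forall F, In F l -> ~ wocc y F.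
Definition nfresh (n : nat) (l : list lform) : Prop :=
  forall F, In F l -> ~ nocc n F.

(* Atoms At(x) for the replacement rules: x:P, x ∈ a, a ∈ N(x), x ∈ {z} *)
Inductive attmpl : Type :=
| TP (p : nat) | TIn (a : nlab) | TN (a : nlab) | TSing (z : wlab).

Definition atI (t : attmpl) (w : wlab) : lform :=
  match t with
  | TP p => LW w (Atom p)
  | TIn a => LIn w a
  | TN a => LN a w
  | TSing z => LIn w (NS z)
  end.

(* P is a (possibly) contracted instance of the multiset of principal
   atoms Full: P is a sub-multiset of Full containing each atom of Full. *)
Definition contr (P Full : list lform) : Prop :=
  incl Full P /\ exists R, Permutation Full (P ++ R).

Inductive calc : Type :=
| cCL | cN | cT | cW | cC
| cU | cNU | cTU | cWU | cCU
| cA | cNA | cTA | cWA | cCA.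

Definition hasN (s : calc) : bool :=
  match s with
  | cN | cT | cW | cC | cNU | cTU | cWU | cCU | cNA | cTA | cWA | cCA => true
  | _ => false end.
Definition hasT (s : calc) : bool :=
  match s with
  | cT | cW | cC | cTU | cWU | cCU | cTA | cWA | cCA => true
  | _ => false end.
Definition hasW (s : calc) : bool :=
  match s with
  | cW | cC | cWU | cCU | cWA | cCA => true
  | _ => false end.
Definition hasC (s : calc) : bool :=
  match s with cC | cCU | cCA => true | _ => false end.
Definition hasU (s : calc) : bool :=
  match s with cU | cNU | cTU | cWU | cCU => true | _ => false end.
Definition hasA (s : calc) : bool :=
  match s with cA | cNA | cTA | cWA | cCA => true | _ => false end.

(* Derivability of the sequent G => D in calculus s.  Sequents are
   multisets, modelled as lists up to permutation (rule der_perm). *)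
Inductive der (s : calc) : list lform -> list lform -> Prop :=
| der_perm G G' D D' :
    Permutation G G' -> Permutation D D' -> der s G D -> der s G' D'
| ax_p x p G D : der s (LW x (Atom p) :: G) (LW x (Atom p) :: D)
| ax_bot x G D : der s (LW x Bot :: G) D
| L_and x A B G D :
    der s (LW x A :: LW x B :: G) D -> der s (LW x (And A B) :: G) D
| R_and x A B G D :
    der s G (LW x A :: D) -> der s G (LW x B :: D) ->
    der s G (LW x (And A B) :: D)
| L_or x A B G D :
    der s (LW x A :: G) D -> der s (LW x B :: G) D ->
    der s (LW x (Or A B) :: G) D
| R_or x A B G D :
    der s G (LW x A :: LW x B :: D) -> der s G (LW x (Or A B) :: D)
| L_imp x A B G D :
    der s G (LW x A :: D) -> der s (LW x B :: G) D ->
    der s (LW x (Imp A B) :: G) D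
| R_imp x A B G D :
    der s (LW x A :: G) (LW x B :: D) -> der s G (LW x (Imp A B) :: D)
| L_all x a A G D :
    der s (LW x A :: LIn x a :: LAll a A :: G) D ->
    der s (LIn x a :: LAll a A :: G) D
| R_all x a A G D :
    wfresh x (G ++ LAll a A :: D) ->
    der s (LIn x a :: G) (LW x A :: D) -> der s G (LAll a A :: D)
| L_ex x a A G D :
    wfresh x (LEx a A :: G ++ D) ->
    der s (LIn x a :: LW x A :: G) D -> der s (LEx a A :: G) D
| R_ex x a A G D :
    der s (LIn x a :: G) (LW x A :: LEx a A :: D) ->
    der s (LIn x a :: G) (LEx a A :: D)
| R_cond n x A B G D :
    nfresh n (G ++ LW x (Cond A B) :: D) ->
    der s (LN (NV n) x :: LEx (NV n) A :: G) (LCond x (NV n) A B :: D) ->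
    der s G (LW x (Cond A B) :: D)
| L_cond a x A B G D :
    der s (LN a x :: LW x (Cond A B) :: G) (LEx a A :: D) ->
    der s (LCond x a A B :: LN a x :: LW x (Cond A B) :: G) D ->
    der s (LN a x :: LW x (Cond A B) :: G) D
| R_bar c x a A B G D :
    der s (LN c x :: LSub c a :: G) (LCond x a A B :: LEx c A :: D) ->
    der s (LN c x :: LSub c a :: G) (LCond x a A B :: LAll c (Imp A B) :: D) ->
    der s (LN c x :: LSub c a :: G) (LCond x a A B :: D)
| L_bar n x a A B G D :
    nfresh n (LCond x a A B :: G ++ D) ->
    der s (LN (NV n) x :: LSub (NV n) a :: LEx (NV n) A
             :: LAll (NV n) (Imp A B) :: G) D ->
    der s (LCond x a A B :: G) D
| r_Ref a G D : der s (LSub a a :: G) D -> der s G D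
| r_Tr c a b G D :
    der s (LSub c a :: LSub c b :: LSub b a :: G) D ->
    der s (LSub c b :: LSub b a :: G) D
| L_sub x a b G D :
    der s (LIn x a :: LSub a b :: LIn x b :: G) D ->
    der s (LIn x a :: LSub a b :: G) D
| r_N n x G D :
    hasN s = true -> nfresh n (G ++ D) ->
    der s (LN (NV n) x :: G) D -> der s G D
| r_0 y a x G D :
    hasN s = true -> wfresh y (LN a x :: G ++ D) ->
    der s (LIn y a :: LN a x :: G) D -> der s (LN a x :: G) D
| r_T n x G D :
    hasT s = true -> nfresh n (G ++ D) ->
    der s (LIn x (NV n) :: LN (NV n) x :: G) D -> der s G D
| r_W x a G D :
    hasW s = true ->
    der s (LIn x a :: LN a x :: G) D -> der s (LN a x :: G) D
| r_Single x G D :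
    hasC s = true ->
    der s (LIn x (NS x) :: LN (NS x) x :: G) D -> der s (LN (NS x) x :: G) D
| r_C x a G D :
    hasC s = true ->
    der s (LN (NS x) x :: LSub (NS x) a :: LN a x :: G) D ->
    der s (LN a x :: G) D
| r_Repl1 y x t G D :
    hasC s = true ->
    der s (LIn y (NS x) :: atI t x :: atI t y :: G) D ->
    der s (LIn y (NS x) :: atI t x :: G) D
| r_Repl2 y x t G D :
    hasC s = true ->
    der s (LIn y (NS x) :: atI t x :: atI t y :: G) D ->
    der s (LIn y (NS x) :: atI t y :: G) D
| r_U1 n a b x y z P G D :
    hasU s = true ->
    contr P [LN a x; LIn y a; LN b y; LIn z b] ->
    nfresh n (P ++ G ++ D) ->
    der s (LIn z (NV n) :: LN (NV n) x :: P ++ G) D -> der s (P ++ G) D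
| r_U2 n a b x y z P G D :
    hasU s = true ->
    contr P [LN a x; LIn y a; LN b x; LIn z b] ->
    nfresh n (P ++ G ++ D) ->
    der s (LIn z (NV n) :: LN (NV n) y :: P ++ G) D -> der s (P ++ G) D
| r_A1 a b x y P G D :
    hasA s = true ->
    contr P [LN a x; LIn y a; LN b x] ->
    der s (LN b y :: P ++ G) D -> der s (P ++ G) D
| r_A2 a b x y G D :
    hasA s = true ->
    der s (LN b x :: LN a x :: LIn y a :: LN b y :: G) D ->
    der s (LN a x :: LIn y a :: LN b y :: G) D.

(* Every rule of the calculi is read as an instance of one schema (principal
   formulas, active parts of the premisses, eigenvariable), so that the
   structural properties are proved once for all rules.  Label substitution
   and weakening are admissible, eigenvariables being renamed apart.  The rules
   whose principal formula does not reappear in their premisses are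
   invertible.  Contraction is admissible by induction on the weight of the
   contracted formula: if it is principal in an invertible rule, the rule is
   inverted and the lighter formulas obtained are contracted; if a rule has it
   principal twice, the closure conditions of the calculi (contracted
   instances of U and A, rule Single for Repl) supply a rule using one copy.
   Cut is eliminated by induction on the weight of the cut formula: it is
   traced up the premiss whose rule for it is not invertible; where it becomes
   principal, the other premiss is inverted and the cut is replaced by cuts on
   lighter formulas, followed by contractions. *)

From Stdlib Require Import List Permutation Lia Arith Wf_nat.
Import ListNotations.

Definition form_eq_dec (A B : form) : {A = B} + {A <> B}.
Proof. decide equality; apply Nat.eq_dec. Qed.

Definition nlab_eq_dec (a b : nlab) : {a = b} + {a <> b}.
Proof. decide equality; apply Nat.eq_dec. Qed.

Definition lform_eq_dec (F G : lform) : {F = G} + {F <> G}.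
Proof. decide equality; auto using Nat.eq_dec, nlab_eq_dec, form_eq_dec. Qed.

Notation mult l x := (count_occ lform_eq_dec l x).

Lemma mult_repeat F n x : mult (repeat F n) x = if lform_eq_dec F x then n else 0.
Proof. induction n; simpl; destruct (lform_eq_dec F x); simpl; auto. Qed.

(* Multiset goals (permutations, multiplicity (in)equalities) are decided by
   comparing multiplicities at a generic element [e]. *)
Ltac mult_at e :=
  repeat match goal with
  | H : Permutation _ _ |- _ =>
      pose proof (proj1 (Permutation_count_occ lform_eq_dec _ _) H e); clear H
  end;
  repeat match goal with
  | H : forall x, x <> ?F -> _ |- _ =>
      let Hn := fresh in destruct (lform_eq_dec e F) as [Hn|Hn];
      [ clear H; try subst e | specialize (H e Hn) ]
  end;
  repeat match goal with
  | H : ?a <> ?b -> _ |- _ =>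
      let Hn := fresh in destruct (lform_eq_dec a b) as [Hn|Hn];
      [ clear H | specialize (H Hn) ]
  end;
  repeat match goal with
  | H : forall x, count_occ _ _ x = _ |- _ => specialize (H e)
  | H : forall x, count_occ _ _ x <= _ |- _ => specialize (H e)
  end;
  repeat match goal with H : context [count_occ _ _ _] |- _ => revert H end;
  repeat progress (rewrite ?app_nil_r, ?map_app, ?count_occ_app, ?mult_repeat; simpl);
  repeat (match goal with |- context [lform_eq_dec ?a ?b] => destruct (lform_eq_dec a b) end;
          try subst; try discriminate; try congruence);
  intros; try congruence; lia.

Ltac mult_solve := match goal with
  | |- Permutation _ _ => apply (Permutation_count_occ lform_eq_dec);
       let e := fresh "e" in intro e; mult_at e
  | |- forall x, x <> _ -> _ => let e := fresh "e" in let Hn := fresh in intros e Hn; mult_at e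
  | |- forall x, _ => let e := fresh "e" in intro e; mult_at e
  end.

Ltac incl_solve := let z := fresh "z" in let Hz := fresh "Hz" in
  intros z Hz; repeat match goal with Hi : incl _ _ |- _ => specialize (Hi z) end;
  simpl in *; repeat (rewrite in_app_iff in * ; simpl in * ); tauto.

Lemma perm_cons_of_in (F : lform) l : In F l -> exists l0, Permutation l (F :: l0).
Proof.
  intros H. apply in_split in H as [l1 [l2 ->]]. exists (l1 ++ l2).
  apply Permutation_sym, Permutation_middle.
Qed.

Lemma perm_app_of_mult_le (P l : list lform) :
  (forall x, mult P x <= mult l x) -> exists l', Permutation l (P ++ l').
Proof.
  revert l. induction P as [|F P IHP]; intros l H.
  - exists l; auto.
  - assert (HF : In F l).
    { apply (count_occ_In lform_eq_dec). specialize (H F). simpl in H.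
      destruct (lform_eq_dec F F); [lia|congruence]. }
    destruct (perm_cons_of_in F l HF) as [l1 Hl1].
    destruct (IHP l1) as [l' Hl'].
    { intros x. specialize (H x). pose proof (proj1 (Permutation_count_occ lform_eq_dec _ _) Hl1 x).
      simpl in *. destruct (lform_eq_dec F x); lia. }
    exists l'. rewrite Hl1. simpl. constructor. exact Hl'.
Qed.

Lemma incl_of_mult_le (l1 l2 : list lform) : (forall x, mult l1 x <= mult l2 x) -> incl l1 l2.
Proof.
  intros H z Hz. apply (count_occ_In lform_eq_dec). apply (count_occ_In lform_eq_dec) in Hz.
  specialize (H z). lia.
Qed.

(** * Rules as instances of one schema *)

Inductive eigen := NoEigen | WEigen (z : wlab) | NEigen (n : nat).

(* In context [Γ ⇒ Δ] the instance has conclusion [pant ++ Γ ⇒ psuc ++ Δ]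
   and premisses [Q ++ Γ ⇒ R ++ Δ] for [(Q, R)] in [prems]. *)
Record rinst := RInst {
  pant : list lform;
  psuc : list lform;
  prems : list (list lform * list lform);
  eigv : eigen }.

Definition eigen_fresh (e : eigen) (l : list lform) : Prop :=
  match e with NoEigen => True | WEigen z => wfresh z l | NEigen n => nfresh n l end.

Inductive rule (s : calc) : rinst -> Prop :=
| ri_ax x p : rule s (RInst [LW x (Atom p)] [LW x (Atom p)] [] NoEigen)
| ri_bot x : rule s (RInst [LW x Bot] [] [] NoEigen)
| ri_Land x A B : rule s (RInst [LW x (And A B)] [] [([LW x A; LW x B], [])] NoEigen)
| ri_Rand x A B : rule s (RInst [] [LW x (And A B)] [([], [LW x A]); ([], [LW x B])] NoEigen)
| ri_Lor x A B : rule s (RInst [LW x (Or A B)] [] [([LW x A], []); ([LW x B], [])] NoEigen)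
| ri_Ror x A B : rule s (RInst [] [LW x (Or A B)] [([], [LW x A; LW x B])] NoEigen)
| ri_Limp x A B : rule s (RInst [LW x (Imp A B)] [] [([], [LW x A]); ([LW x B], [])] NoEigen)
| ri_Rimp x A B : rule s (RInst [] [LW x (Imp A B)] [([LW x A], [LW x B])] NoEigen)
| ri_Lall x a A :
    rule s (RInst [LIn x a; LAll a A] [] [([LW x A; LIn x a; LAll a A], [])] NoEigen)
| ri_Rall x a A : rule s (RInst [] [LAll a A] [([LIn x a], [LW x A])] (WEigen x))
| ri_Lex x a A : rule s (RInst [LEx a A] [] [([LIn x a; LW x A], [])] (WEigen x))
| ri_Rex x a A :
    rule s (RInst [LIn x a] [LEx a A] [([LIn x a], [LW x A; LEx a A])] NoEigen)
| ri_Rcond n x A B : rule s (RInst [] [LW x (Cond A B)]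
    [([LN (NV n) x; LEx (NV n) A], [LCond x (NV n) A B])] (NEigen n))
| ri_Lcond a x A B : rule s (RInst [LN a x; LW x (Cond A B)] []
    [([LN a x; LW x (Cond A B)], [LEx a A]);
     ([LCond x a A B; LN a x; LW x (Cond A B)], [])] NoEigen)
| ri_Rbar c x a A B : rule s (RInst [LN c x; LSub c a] [LCond x a A B]
    [([LN c x; LSub c a], [LCond x a A B; LEx c A]);
     ([LN c x; LSub c a], [LCond x a A B; LAll c (Imp A B)])] NoEigen)
| ri_Lbar n x a A B : rule s (RInst [LCond x a A B] []
    [([LN (NV n) x; LSub (NV n) a; LEx (NV n) A; LAll (NV n) (Imp A B)], [])] (NEigen n))
| ri_Ref a : rule s (RInst [] [] [([LSub a a], [])] NoEigen)
| ri_Tr c a b :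
    rule s (RInst [LSub c b; LSub b a] [] [([LSub c a; LSub c b; LSub b a], [])] NoEigen)
| ri_Lsub x a b :
    rule s (RInst [LIn x a; LSub a b] [] [([LIn x a; LSub a b; LIn x b], [])] NoEigen)
| ri_N n x : hasN s = true -> rule s (RInst [] [] [([LN (NV n) x], [])] (NEigen n))
| ri_0 y a x : hasN s = true -> rule s (RInst [LN a x] [] [([LIn y a; LN a x], [])] (WEigen y))
| ri_T n x : hasT s = true ->
    rule s (RInst [] [] [([LIn x (NV n); LN (NV n) x], [])] (NEigen n))
| ri_W x a : hasW s = true -> rule s (RInst [LN a x] [] [([LIn x a; LN a x], [])] NoEigen)
| ri_Single x : hasC s = true ->
    rule s (RInst [LN (NS x) x] [] [([LIn x (NS x); LN (NS x) x], [])] NoEigen)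
| ri_C x a : hasC s = true ->
    rule s (RInst [LN a x] [] [([LN (NS x) x; LSub (NS x) a; LN a x], [])] NoEigen)
| ri_Repl1 y x t : hasC s = true ->
    rule s (RInst [LIn y (NS x); atI t x] [] [([LIn y (NS x); atI t x; atI t y], [])] NoEigen)
| ri_Repl2 y x t : hasC s = true ->
    rule s (RInst [LIn y (NS x); atI t y] [] [([LIn y (NS x); atI t x; atI t y], [])] NoEigen)
| ri_U1 n a b x y z P : hasU s = true -> contr P [LN a x; LIn y a; LN b y; LIn z b] ->
    rule s (RInst P [] [(LIn z (NV n) :: LN (NV n) x :: P, [])] (NEigen n))
| ri_U2 n a b x y z P : hasU s = true -> contr P [LN a x; LIn y a; LN b x; LIn z b] ->
    rule s (RInst P [] [(LIn z (NV n) :: LN (NV n) y :: P, [])] (NEigen n))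
| ri_A1 a b x y P : hasA s = true -> contr P [LN a x; LIn y a; LN b x] ->
    rule s (RInst P [] [(LN b y :: P, [])] NoEigen)
| ri_A2 a b x y : hasA s = true ->
    rule s (RInst [LN a x; LIn y a; LN b y] [] [([LN b x; LN a x; LIn y a; LN b y], [])] NoEigen).

Inductive uder (s : calc) : list lform -> list lform -> Prop :=
| uder_rule r Γ Δ G D : rule s r ->
    Permutation G (pant r ++ Γ) -> Permutation D (psuc r ++ Δ) ->
    eigen_fresh (eigv r) (pant r ++ psuc r ++ Γ ++ Δ) ->
    (forall Q R, In (Q, R) (prems r) -> uder s (Q ++ Γ) (R ++ Δ)) -> uder s G D.

Lemma uder_perm s G D G' D' :
  uder s G D -> Permutation G G' -> Permutation D D' -> uder s G' D'.
Proof.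
  intros [r Γ Δ G0 D0 Hr HG HD Hf Hp] HG' HD'.
  apply uder_rule with r Γ Δ; auto.
  - rewrite <- HG'. exact HG.
  - rewrite <- HD'. exact HD.
Qed.

Lemma wfresh_incl x l1 l2 : incl l1 l2 -> wfresh x l2 -> wfresh x l1.
Proof. unfold wfresh; intros Hi Hf F HF; apply Hf, Hi, HF. Qed.

Lemma nfresh_incl x l1 l2 : incl l1 l2 -> nfresh x l2 -> nfresh x l1.
Proof. unfold nfresh; intros Hi Hf F HF; apply Hf, Hi, HF. Qed.

Lemma eigen_fresh_incl e l1 l2 : incl l1 l2 -> eigen_fresh e l2 -> eigen_fresh e l1.
Proof. destruct e; simpl; eauto using wfresh_incl, nfresh_incl. Qed.

Ltac prem_cases Hin := simpl in Hin;
  repeat match type of Hin with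
  | _ \/ _ => destruct Hin as [Hin|Hin]
  | False => destruct Hin
  | (_, _) = (_, _) => injection Hin as <- <-
  end.

Ltac by_rule ri G D :=
  eapply uder_rule with (Γ := G) (Δ := D);
  [ solve [eapply ri; eauto] | simpl; mult_solve | simpl; mult_solve
  | simpl; first [exact I | (eapply wfresh_incl || eapply nfresh_incl); [|eassumption]; incl_solve]
  | let Q := fresh "Q" in let R := fresh "R" in let Hin := fresh "Hin" in
    intros Q R Hin; prem_cases Hin; simpl; assumption ].

Lemma der_uder s G D : der s G D -> uder s G D.
Proof.
  induction 1.
  - eapply uder_perm; eauto.
  - by_rule (ri_ax s x p) G D.
  - by_rule (ri_bot s x) G D.
  - by_rule (ri_Land s x A B) G D.
  - by_rule (ri_Rand s x A B) G D.
  - by_rule (ri_Lor s x A B) G D.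
  - by_rule (ri_Ror s x A B) G D.
  - by_rule (ri_Limp s x A B) G D.
  - by_rule (ri_Rimp s x A B) G D.
  - by_rule (ri_Lall s x a A) G D.
  - by_rule (ri_Rall s x a A) G D.
  - by_rule (ri_Lex s x a A) G D.
  - by_rule (ri_Rex s x a A) G D.
  - by_rule (ri_Rcond s n x A B) G D.
  - by_rule (ri_Lcond s a x A B) G D.
  - by_rule (ri_Rbar s c x a A B) G D.
  - by_rule (ri_Lbar s n x a A B) G D.
  - by_rule (ri_Ref s a) G D.
  - by_rule (ri_Tr s c a b) G D.
  - by_rule (ri_Lsub s x a b) G D.
  - by_rule (ri_N s n x) G D.
  - by_rule (ri_0 s y a x) G D.
  - by_rule (ri_T s n x) G D.
  - by_rule (ri_W s x a) G D.
  - by_rule (ri_Single s x) G D.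
  - by_rule (ri_C s x a) G D.
  - by_rule (ri_Repl1 s y x t) G D.
  - by_rule (ri_Repl2 s y x t) G D.
  - by_rule (ri_U1 s n a b x y z P) G D.
  - by_rule (ri_U2 s n a b x y z P) G D.
  - by_rule (ri_A1 s a b x y P) G D.
  - by_rule (ri_A2 s a b x y) G D.
Qed.

Ltac fresh_from Hf := first [ eapply wfresh_incl; [|exact Hf]; incl_solve
                            | eapply nfresh_incl; [|exact Hf]; incl_solve ].

Lemma uder_der s G D : uder s G D -> der s G D.
Proof.
  induction 1 as [r Γ Δ G D Hr HG HD Hf Hp IH].
  apply der_perm with (pant r ++ Γ) (psuc r ++ Δ); try (apply Permutation_sym; assumption).
  destruct Hr; simpl in *;
  try pose proof (IH _ _ (or_introl eq_refl)) as I1;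
  try pose proof (IH _ _ (or_intror (or_introl eq_refl))) as I2; simpl in *.
  - apply ax_p.
  - apply ax_bot.
  - apply L_and; auto.
  - apply R_and; auto.
  - apply L_or; auto.
  - apply R_or; auto.
  - apply L_imp; auto.
  - apply R_imp; auto.
  - apply L_all; auto.
  - apply R_all with x; [fresh_from Hf | auto].
  - apply L_ex with x; [fresh_from Hf | auto].
  - apply R_ex; auto.
  - apply R_cond with n; [fresh_from Hf | auto].
  - apply L_cond; auto.
  - apply R_bar; auto.
  - apply L_bar with n; [fresh_from Hf | auto].
  - apply r_Ref with a; auto.
  - apply r_Tr; auto.
  - apply L_sub; auto.
  - apply r_N with n x; [auto | fresh_from Hf | auto].
  - apply r_0 with y; [auto | fresh_from Hf | auto].
  - apply r_T with n x; [auto | fresh_from Hf | auto].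
  - apply r_W; auto.
  - apply r_Single; auto.
  - apply r_C; auto.
  - apply r_Repl1; auto.
  - apply r_Repl2; auto.
  - eapply r_U1; eauto; fresh_from Hf.
  - eapply r_U2; eauto; fresh_from Hf.
  - eapply r_A1; eauto.
  - apply r_A2; auto.
Qed.

(** * Label substitution and weakening *)

Record subst := Subst { sub_w : wlab -> wlab; sub_n : nat -> nlab }.

Definition nsub (σ : subst) (a : nlab) : nlab :=
  match a with NV n => sub_n σ n | NS x => NS (sub_w σ x) end.

Definition lsub (σ : subst) (F : lform) : lform :=
  match F with
  | LN a x => LN (nsub σ a) (sub_w σ x)
  | LIn x a => LIn (sub_w σ x) (nsub σ a)
  | LSub a b => LSub (nsub σ a) (nsub σ b)
  | LW x A => LW (sub_w σ x) A
  | LEx a A => LEx (nsub σ a) A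
  | LAll a A => LAll (nsub σ a) A
  | LCond x a A B => LCond (sub_w σ x) (nsub σ a) A B
  end.

Definition tsub (σ : subst) (t : attmpl) : attmpl :=
  match t with
  | TP p => TP p | TIn a => TIn (nsub σ a) | TN a => TN (nsub σ a)
  | TSing z => TSing (sub_w σ z)
  end.

(* An eigenvariable mapped to a singleton label is dropped; [rule_rsub]
   excludes this case. *)
Definition esub (σ : subst) (e : eigen) : eigen :=
  match e with
  | NoEigen => NoEigen
  | WEigen z => WEigen (sub_w σ z)
  | NEigen n => match sub_n σ n with NV n' => NEigen n' | NS _ => NoEigen end
  end.

Definition rsub (σ : subst) (r : rinst) : rinst :=
  RInst (map (lsub σ) (pant r)) (map (lsub σ) (psuc r))
        (map (fun QR => (map (lsub σ) (fst QR), map (lsub σ) (snd QR))) (prems r))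
        (esub σ (eigv r)).

Definition subst_id : subst := Subst (fun x => x) NV.

Lemma nsub_id a : nsub subst_id a = a.
Proof. destruct a; reflexivity. Qed.

Lemma map_lsub_id l : map (lsub subst_id) l = l.
Proof.
  induction l as [|F l IH]; simpl; [reflexivity|].
  rewrite IH. destruct F; simpl; rewrite ?nsub_id; reflexivity.
Qed.

Lemma lsub_atI σ t w : lsub σ (atI t w) = atI (tsub σ t) (sub_w σ w).
Proof. destruct t; reflexivity. Qed.

Lemma contr_map f P Full : contr P Full -> contr (map f P) (map f Full).
Proof.
  intros [H1 [R H2]]. split.
  - apply incl_map; auto.
  - exists (map f R). rewrite <- map_app. apply Permutation_map; auto.
Qed.

Lemma contr_in (F : lform) P Full : contr P Full -> In F P -> In F Full.
Proof.
  intros [_ [R HP]] H. apply (Permutation_in _ (Permutation_sym HP)), in_or_app. auto.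
Qed.

Lemma rule_rsub s σ r : rule s r ->
  (forall n, eigv r = NEigen n -> exists n', sub_n σ n = NV n') -> rule s (rsub σ r).
Proof.
  intros Hr Hn. destruct Hr; unfold rsub; simpl in *;
  try (destruct (Hn _ eq_refl) as [n' E]; rewrite E);
  rewrite ?lsub_atI; try (constructor; auto; fail).
  all: match goal with H : contr _ _ |- _ => apply (contr_map (lsub σ)) in H; simpl in H end;
    solve [eapply ri_U1; eauto | eapply ri_U2; eauto | eapply ri_A1; eauto].
Qed.

Lemma in_prems_rsub σ r Q' R' : In (Q', R') (prems (rsub σ r)) ->
  exists Q R, In (Q, R) (prems r) /\ Q' = map (lsub σ) Q /\ R' = map (lsub σ) R.
Proof.
  simpl. intros H. apply in_map_iff in H as [[Q R] [E H]].
  simpl in E. injection E as <- <-. eauto.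
Qed.

Definition nlab_wlabels (a : nlab) : list wlab := match a with NS x => [x] | NV _ => [] end.
Definition nlab_nvars (a : nlab) : list nat := match a with NV n => [n] | NS _ => [] end.

Definition wlabels (F : lform) : list wlab :=
  match F with
  | LN a x | LIn x a | LCond x a _ _ => x :: nlab_wlabels a
  | LSub a b => nlab_wlabels a ++ nlab_wlabels b
  | LW x _ => [x]
  | LEx a _ | LAll a _ => nlab_wlabels a
  end.

Definition nvars (F : lform) : list nat :=
  match F with
  | LN a _ | LIn _ a | LEx a _ | LAll a _ | LCond _ a _ _ => nlab_nvars a
  | LSub a b => nlab_nvars a ++ nlab_nvars b
  | LW _ _ => []
  end.

Lemma wocc_in_wlabels y F : wocc y F -> In y (wlabels F).
Proof.
  destruct F; simpl; unfold nlab_has_w; intros H;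
  repeat match goal with H : _ \/ _ |- _ => destruct H end; subst; simpl;
  rewrite ?in_app_iff; simpl; auto.
Qed.

Lemma nocc_in_nvars n F : nocc n F -> In n (nvars F).
Proof.
  destruct F; simpl; intros H;
  repeat match goal with H : _ \/ _ |- _ => destruct H end; subst; simpl;
  rewrite ?in_app_iff; simpl; auto; contradiction.
Qed.

Definition fresh_wlab (l : list lform) : wlab := S (list_max (flat_map wlabels l)).
Definition fresh_nvar (l : list lform) : nat := S (list_max (flat_map nvars l)).

Lemma le_list_max k l : In k l -> k <= list_max l.
Proof.
  intros H. pose proof (proj1 (list_max_le l (list_max l)) (le_n _)) as HF.
  rewrite Forall_forall in HF. auto.
Qed.

Lemma fresh_wlab_spec l : wfresh (fresh_wlab l) l.
Proof.
  intros F HF Ho. apply wocc_in_wlabels in Ho.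
  assert (H : In (fresh_wlab l) (flat_map wlabels l)) by (apply in_flat_map; eauto).
  apply le_list_max in H. unfold fresh_wlab in H. lia.
Qed.

Lemma fresh_nvar_spec l : nfresh (fresh_nvar l) l.
Proof.
  intros F HF Ho. apply nocc_in_nvars in Ho.
  assert (H : In (fresh_nvar l) (flat_map nvars l)) by (apply in_flat_map; eauto).
  apply le_list_max in H. unfold fresh_nvar in H. lia.
Qed.

Definition upd_w (σ : subst) (z z' : wlab) : subst :=
  Subst (fun w => if Nat.eq_dec w z then z' else sub_w σ w) (sub_n σ).
Definition upd_n (σ : subst) (n : nat) (b : nlab) : subst :=
  Subst (sub_w σ) (fun m => if Nat.eq_dec m n then b else sub_n σ m).

Definition agree (σ' σ : subst) (l : list lform) : Prop :=
  forall F, In F l -> lsub σ' F = lsub σ F.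

Lemma agree_refl σ l : agree σ σ l.
Proof. intros F _. reflexivity. Qed.

Lemma agree_incl σ' σ l l' : agree σ' σ l -> incl l' l -> agree σ' σ l'.
Proof. intros H Hi F HF. apply H, Hi, HF. Qed.

Lemma map_agree σ' σ l l' : agree σ' σ l -> incl l' l -> map (lsub σ') l' = map (lsub σ) l'.
Proof. intros H Hi. apply map_ext_in. auto. Qed.

Lemma agree_upd_w σ z z' l : wfresh z l -> agree (upd_w σ z z') σ l.
Proof.
  intros Hf F HF. specialize (Hf F HF).
  destruct F; simpl in *; unfold nlab_has_w, nsub in *;
  repeat match goal with |- context [match ?a with NV _ => _ | NS _ => _ end] =>
    destruct a end; simpl;
  repeat (destruct Nat.eq_dec; subst); try tauto; reflexivity.
Qed.

Lemma agree_upd_n σ n b l : nfresh n l -> agree (upd_n σ n b) σ l.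
Proof.
  intros Hf F HF. specialize (Hf F HF).
  destruct F; simpl in *; unfold nsub in *;
  repeat match goal with |- context [match ?a with NV _ => _ | NS _ => _ end] =>
    destruct a end; simpl;
  repeat (destruct Nat.eq_dec; subst); try tauto; reflexivity.
Qed.

Lemma rename_eigen s r l σ L : rule s r -> eigen_fresh (eigv r) l ->
  exists σ', rule s (rsub σ' r) /\ agree σ' σ l /\
             eigen_fresh (eigv (rsub σ' r)) (map (lsub σ) l ++ L).
Proof.
  intros Hr Hf. simpl. destruct (eigv r) as [|z|n] eqn:E; simpl in Hf.
  - exists σ. split; [apply rule_rsub; auto; congruence|]. split; [apply agree_refl | exact I].
  - exists (upd_w σ z (fresh_wlab (map (lsub σ) l ++ L))).
    split; [apply rule_rsub; auto; congruence|]. split; [apply agree_upd_w; auto|].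
    simpl. destruct Nat.eq_dec; [apply fresh_wlab_spec | congruence].
  - set (n' := fresh_nvar (map (lsub σ) l ++ L)).
    exists (upd_n σ n (NV n')). split; [|split; [apply agree_upd_n; auto|]].
    + apply rule_rsub; auto. intros m Hm. rewrite E in Hm. injection Hm as <-.
      simpl. destruct Nat.eq_dec; [eauto | congruence].
    + simpl. destruct Nat.eq_dec; [apply fresh_nvar_spec | congruence].
Qed.

(* The eigenvariable is renamed away from the new context [G' ⇒ D'], hence
   the premisses are needed under every [σ'] agreeing with [σ] on the
   conclusion. *)
Lemma uder_rsub s r Γ Δ σ G' D' : rule s r ->
  eigen_fresh (eigv r) (pant r ++ psuc r ++ Γ ++ Δ) ->
  (forall σ', agree σ' σ (pant r ++ psuc r ++ Γ ++ Δ) -> forall Q R, In (Q, R) (prems r) ->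
     uder s (G' ++ map (lsub σ') Q) (D' ++ map (lsub σ') R)) ->
  uder s (G' ++ map (lsub σ) (pant r)) (D' ++ map (lsub σ) (psuc r)).
Proof.
  intros Hr Hf Hp.
  destruct (rename_eigen s r _ σ (G' ++ D') Hr Hf) as [σ' [Hr' [Hag Hf']]].
  apply uder_rule with (rsub σ' r) G' D'; auto; simpl.
  - rewrite (map_agree σ' σ _ (pant r) Hag) by incl_solve. apply Permutation_app_comm.
  - rewrite (map_agree σ' σ _ (psuc r) Hag) by incl_solve. apply Permutation_app_comm.
  - eapply eigen_fresh_incl; [|exact Hf']. rewrite !map_app.
    rewrite (map_agree σ' σ _ (pant r) Hag), (map_agree σ' σ _ (psuc r) Hag) by incl_solve.
    incl_solve.
  - intros Q' R' Hin. apply in_prems_rsub in Hin as [Q [R [Hin [-> ->]]]].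
    eapply uder_perm; [apply (Hp σ' Hag Q R Hin) | |]; apply Permutation_app_comm.
Qed.

Lemma uder_subst_weaken s G D : uder s G D -> forall σ G' D',
  uder s (G' ++ map (lsub σ) G) (D' ++ map (lsub σ) D).
Proof.
  induction 1 as [r Γ Δ G D Hr HG HD Hf Hp IH]. intros σ G' D'.
  apply (Permutation_map (lsub σ)) in HG, HD. rewrite map_app in HG, HD.
  eapply uder_perm;
    [apply (uder_rsub s r Γ Δ σ (G' ++ map (lsub σ) Γ) (D' ++ map (lsub σ) Δ) Hr Hf) | |].
  - intros σ' Hag Q R Hin. specialize (IH Q R Hin σ' G' D'). rewrite !map_app in IH.
    rewrite (map_agree σ' σ _ Γ Hag), (map_agree σ' σ _ Δ Hag) in IH by incl_solve.
    eapply uder_perm; [exact IH | |]; mult_solve.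
  - mult_solve.
  - mult_solve.
Qed.

Lemma uder_weaken s G D G' D' : uder s G D -> uder s (G' ++ G) (D' ++ D).
Proof.
  intros H. pose proof (uder_subst_weaken s G D H subst_id G' D') as H'.
  rewrite !map_lsub_id in H'. exact H'.
Qed.
Lemma psuc_single s r F : rule s r -> In F (psuc r) -> psuc r = [F].
Proof. intros Hr H; destruct Hr; simpl in *; intuition congruence. Qed.

Lemma psuc_length s r : rule s r -> length (psuc r) <= 1.
Proof. intros Hr; destruct Hr; simpl; lia. Qed.

Lemma split_nonprincipal (F : lform) P Γ G G0 : Permutation G (P ++ Γ) ->
  Permutation G (F :: G0) -> ~ In F P ->
  exists Γ0, Permutation Γ (F :: Γ0) /\ Permutation G0 (P ++ Γ0).
Proof.
  intros H1 H2 Hn.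
  assert (HF : In F (P ++ Γ)) by (rewrite <- H1, H2; left; reflexivity).
  apply in_app_or in HF as [HF|HF]; [contradiction|].
  destruct (perm_cons_of_in F Γ HF) as [Γ0 HΓ]. exists Γ0. split; auto. mult_solve.
Qed.

(** * Replacing a formula by a sequent; invertibility *)

(* [uder_track_suc] replaces an occurrence of [Fc] in the succedent by the
   sequent [G' ⇒ D'] throughout a derivation; only the steps where its
   ancestor [F0] is principal need an argument, which is [suc_principal_case].
   The substitution is carried along so that eigenvariables can be renamed
   apart from [G' ⇒ D'].  Inversion and cut reduction are both instances. *)
Definition suc_principal_case s (Fc : lform) (G' D' : list lform) : Prop :=
  forall r Γ Δ σ F0, rule s r -> psuc r = [F0] -> lsub σ F0 = Fc ->
    eigen_fresh (eigv r) (pant r ++ psuc r ++ Γ ++ Δ) ->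
    (forall Q R, In (Q, R) (prems r) -> uder s (Q ++ Γ) (R ++ Δ)) ->
    (forall Q R, In (Q, R) (prems r) -> forall σ' D0, Permutation (R ++ Δ) (F0 :: D0) ->
       lsub σ' F0 = Fc -> uder s (G' ++ map (lsub σ') (Q ++ Γ)) (D' ++ map (lsub σ') D0)) ->
    uder s (G' ++ map (lsub σ) (pant r ++ Γ)) (D' ++ map (lsub σ) Δ).

Definition ant_principal_case s (Fc : lform) (G' D' : list lform) : Prop :=
  forall r Γ Δ σ F0 P, rule s r -> Permutation (pant r) (F0 :: P) -> lsub σ F0 = Fc ->
    eigen_fresh (eigv r) (pant r ++ psuc r ++ Γ ++ Δ) ->
    (forall Q R, In (Q, R) (prems r) -> uder s (Q ++ Γ) (R ++ Δ)) ->
    (forall Q R, In (Q, R) (prems r) -> forall σ' G0, Permutation (Q ++ Γ) (F0 :: G0) ->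
       lsub σ' F0 = Fc -> uder s (G' ++ map (lsub σ') G0) (D' ++ map (lsub σ') (R ++ Δ))) ->
    uder s (G' ++ map (lsub σ) (P ++ Γ)) (D' ++ map (lsub σ) (psuc r ++ Δ)).

Lemma uder_track_suc s Fc G' D' : suc_principal_case s Fc G' D' ->
  forall G D, uder s G D -> forall σ F0 D0, Permutation D (F0 :: D0) -> lsub σ F0 = Fc ->
  uder s (G' ++ map (lsub σ) G) (D' ++ map (lsub σ) D0).
Proof.
  intros Hpc G D Hd. induction Hd as [r Γ Δ G D Hr HG HD Hf Hp IH]. intros σ F0 D0 HP Hσ.
  apply (Permutation_map (lsub σ)) in HG. rewrite map_app in HG.
  destruct (in_dec lform_eq_dec F0 (psuc r)) as [Hin|Hnin].
  - pose proof (psuc_single s r F0 Hr Hin) as E.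
    pose proof (Hpc r Γ Δ σ F0 Hr E Hσ Hf Hp
                  (fun Q R Hin σ' D1 HP' Hs => IH Q R Hin σ' F0 D1 HP' Hs)) as H1.
    rewrite E in HD.
    assert (HΔ : Permutation D0 Δ)
      by (apply Permutation_cons_inv with F0; rewrite <- HP; exact HD).
    eapply uder_perm; [exact H1 | rewrite map_app; mult_solve | now rewrite HΔ].
  - destruct (split_nonprincipal _ _ _ _ _ HD HP Hnin) as [Δ0 [HΔ HD0]].
    apply (Permutation_map (lsub σ)) in HD0. rewrite map_app in HD0.
    eapply uder_perm;
      [apply (uder_rsub s r Γ Δ σ (G' ++ map (lsub σ) Γ) (D' ++ map (lsub σ) Δ0) Hr Hf) | |].
    + intros σ' Hag Q R Hin.
      assert (Ha0 : agree σ' σ (F0 :: Δ0))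
        by (intros F HF; apply Hag; rewrite !in_app_iff, HΔ; auto).
      assert (HP' : Permutation (R ++ Δ) (F0 :: R ++ Δ0)) by mult_solve.
      specialize (IH Q R Hin σ' F0 (R ++ Δ0) HP' ltac:(rewrite (Ha0 F0); simpl; auto)).
      rewrite !map_app in IH.
      rewrite (map_agree σ' σ _ Γ Hag), (map_agree σ' σ _ Δ0 Ha0) in IH by incl_solve.
      eapply uder_perm; [exact IH | |]; mult_solve.
    + mult_solve.
    + mult_solve.
Qed.

Lemma uder_track_ant s Fc G' D' : ant_principal_case s Fc G' D' ->
  forall G D, uder s G D -> forall σ F0 G0, Permutation G (F0 :: G0) -> lsub σ F0 = Fc ->
  uder s (G' ++ map (lsub σ) G0) (D' ++ map (lsub σ) D).
Proof.
  intros Hpc G D Hd. induction Hd as [r Γ Δ G D Hr HG HD Hf Hp IH]. intros σ F0 G0 HP Hσ.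
  apply (Permutation_map (lsub σ)) in HD. rewrite map_app in HD.
  destruct (in_dec lform_eq_dec F0 (pant r)) as [Hin|Hnin].
  - destruct (perm_cons_of_in F0 (pant r) Hin) as [P HP0].
    pose proof (Hpc r Γ Δ σ F0 P Hr HP0 Hσ Hf Hp
                  (fun Q R Hin σ' G1 HP' Hs => IH Q R Hin σ' F0 G1 HP' Hs)) as H1.
    assert (HΓ : Permutation G0 (P ++ Γ)) by mult_solve.
    eapply uder_perm; [exact H1 | now rewrite HΓ | rewrite map_app; mult_solve].
  - destruct (split_nonprincipal _ _ _ _ _ HG HP Hnin) as [Γ0 [HΓ HG0]].
    apply (Permutation_map (lsub σ)) in HG0. rewrite map_app in HG0.
    eapply uder_perm;
      [apply (uder_rsub s r Γ Δ σ (G' ++ map (lsub σ) Γ0) (D' ++ map (lsub σ) Δ) Hr Hf) | |].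
    + intros σ' Hag Q R Hin.
      assert (Ha0 : agree σ' σ (F0 :: Γ0))
        by (intros F HF; apply Hag; rewrite !in_app_iff, HΓ; auto).
      assert (HP' : Permutation (Q ++ Γ) (F0 :: Q ++ Γ0)) by mult_solve.
      specialize (IH Q R Hin σ' F0 (Q ++ Γ0) HP' ltac:(rewrite (Ha0 F0); simpl; auto)).
      rewrite !map_app in IH.
      rewrite (map_agree σ' σ _ Γ0 Ha0), (map_agree σ' σ _ Δ Hag) in IH by incl_solve.
      eapply uder_perm; [exact IH | |]; mult_solve.
    + mult_solve.
    + mult_solve.
Qed.

Definition invertible_ant s F Q R := forall G D, uder s (F :: G) D -> uder s (Q ++ G) (R ++ D).
Definition invertible_suc s F Q R := forall G D, uder s G (F :: D) -> uder s (Q ++ G) (R ++ D).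

Lemma invertible_ant_of_principal s F Q R :
  ant_principal_case s F Q R -> invertible_ant s F Q R.
Proof.
  intros Hpc G D H.
  pose proof (uder_track_ant s F Q R Hpc _ _ H subst_id F G (Permutation_refl _)) as H'.
  rewrite !map_lsub_id in H'. apply H'. destruct F; simpl; rewrite ?nsub_id; reflexivity.
Qed.

Lemma invertible_suc_of_principal s F Q R :
  suc_principal_case s F Q R -> invertible_suc s F Q R.
Proof.
  intros Hpc G D H.
  pose proof (uder_track_suc s F Q R Hpc _ _ H subst_id F D (Permutation_refl _)) as H'.
  rewrite !map_lsub_id in H'. apply H'. destruct F; simpl; rewrite ?nsub_id; reflexivity.
Qed.

Lemma uder_subst_prem s Q R Γ Δ σ σ' :
  uder s (Q ++ Γ) (R ++ Δ) -> agree σ' σ (Γ ++ Δ) ->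
  uder s (map (lsub σ') Q ++ map (lsub σ) Γ) (map (lsub σ') R ++ map (lsub σ) Δ).
Proof.
  intros H Hag. pose proof (uder_subst_weaken s _ _ H σ' [] []) as H'. simpl in H'.
  rewrite !map_app, (map_agree σ' σ _ Γ Hag), (map_agree σ' σ _ Δ Hag) in H' by incl_solve.
  exact H'.
Qed.

(* Introduce the data of a principal case, discard the rules in which the
   tracked formula cannot be principal, and expose the remaining instance. *)
Ltac ant_principal_rules Hr Hin Hσ :=
  destruct Hr; simpl in Hin;
  try (match goal with H : contr _ _ |- _ => apply (contr_in _ _ _ H) in Hin end; simpl in Hin);
  try (match goal with t : attmpl |- _ => destruct t end; simpl in Hin);
  repeat (destruct Hin as [Hin|Hin]; [subst; simpl in Hσ; try discriminate|]);
  try contradiction.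

Ltac suc_principal_rules Hr Hps Hσ :=
  destruct Hr; simpl in Hps; try discriminate; injection Hps as <-; simpl in Hσ;
  try discriminate.

Ltac ant_principal_intro :=
  let Hp := fresh "Hp" in let IHp := fresh "IHp" in
  let r := fresh "r" in let Γ := fresh "Γ" in let Δ := fresh "Δ" in
  let σ := fresh "σ" in let F0 := fresh "F0" in let P := fresh "P" in
  let Hr := fresh "Hr" in let HP := fresh "HP" in let Hσ := fresh "Hσ" in
  let Hf := fresh "Hf" in let Hin := fresh "Hin" in
  intros r Γ Δ σ F0 P Hr HP Hσ Hf Hp IHp;
  assert (Hin : In F0 (pant r)) by (rewrite HP; left; reflexivity);
  ant_principal_rules Hr Hin Hσ; injection Hσ; intros; subst; clear Hσ;
  first [ apply Permutation_length_1_inv in HP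
        | apply Permutation_length_2_inv in HP as [HP|HP] ];
  inversion HP; subst; clear HP; simpl in *.

Ltac suc_principal_intro :=
  let Hp := fresh "Hp" in let IHp := fresh "IHp" in
  let r := fresh "r" in let Γ := fresh "Γ" in let Δ := fresh "Δ" in
  let σ := fresh "σ" in let F0 := fresh "F0" in
  let Hr := fresh "Hr" in let Hps := fresh "Hps" in let Hσ := fresh "Hσ" in
  let Hf := fresh "Hf" in
  intros r Γ Δ σ F0 Hr Hps Hσ Hf Hp IHp;
  suc_principal_rules Hr Hps Hσ; injection Hσ; intros; subst; clear Hσ; simpl in *.

Ltac first_premise Hp σ σ' Hag :=
  pose proof (uder_subst_prem _ _ _ _ _ σ σ' (Hp _ _ (or_introl eq_refl)) Hag); simpl in *.

Ltac second_premise Hp σ σ' Hag :=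
  pose proof (uder_subst_prem _ _ _ _ _ σ σ' (Hp _ _ (or_intror (or_introl eq_refl))) Hag);
  simpl in *.

Lemma invertible_Land s x A B : invertible_ant s (LW x (And A B)) [LW x A; LW x B] [].
Proof.
  apply invertible_ant_of_principal. ant_principal_intro.
  first_premise Hp σ σ (agree_refl σ (Γ ++ Δ)).
  eapply uder_perm; [eassumption | |]; mult_solve.
Qed.

Lemma invertible_Lor1 s x A B : invertible_ant s (LW x (Or A B)) [LW x A] [].
Proof.
  apply invertible_ant_of_principal. ant_principal_intro.
  first_premise Hp σ σ (agree_refl σ (Γ ++ Δ)).
  eapply uder_perm; [eassumption | |]; mult_solve.
Qed.

Lemma invertible_Lor2 s x A B : invertible_ant s (LW x (Or A B)) [LW x B] [].
Proof.
  apply invertible_ant_of_principal. ant_principal_intro.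
  second_premise Hp σ σ (agree_refl σ (Γ ++ Δ)).
  eapply uder_perm; [eassumption | |]; mult_solve.
Qed.

Lemma invertible_Limp1 s x A B : invertible_ant s (LW x (Imp A B)) [] [LW x A].
Proof.
  apply invertible_ant_of_principal. ant_principal_intro.
  first_premise Hp σ σ (agree_refl σ (Γ ++ Δ)).
  eapply uder_perm; [eassumption | |]; mult_solve.
Qed.

Lemma invertible_Limp2 s x A B : invertible_ant s (LW x (Imp A B)) [LW x B] [].
Proof.
  apply invertible_ant_of_principal. ant_principal_intro.
  second_premise Hp σ σ (agree_refl σ (Γ ++ Δ)).
  eapply uder_perm; [eassumption | |]; mult_solve.
Qed.

Lemma invertible_Lex s a A y : invertible_ant s (LEx a A) [LIn y a; LW y A] [].
Proof.
  apply invertible_ant_of_principal. ant_principal_intro.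
  pose proof (agree_upd_w σ x y _ Hf) as Hag.
  first_premise Hp σ (upd_w σ x y) (agree_incl _ _ _ (Γ ++ Δ) Hag ltac:(incl_solve)).
  injection (Hag (LEx a0 A) (or_introl eq_refl)) as Ea.
  destruct Nat.eq_dec; [|congruence]. rewrite Ea in *. assumption.
Qed.

Lemma invertible_Lbar s x a A B c : invertible_ant s (LCond x a A B)
  [LN c x; LSub c a; LEx c A; LAll c (Imp A B)] [].
Proof.
  apply invertible_ant_of_principal. ant_principal_intro.
  pose proof (agree_upd_n σ n c _ Hf) as Hag.
  first_premise Hp σ (upd_n σ n c) (agree_incl _ _ _ (Γ ++ Δ) Hag ltac:(incl_solve)).
  injection (Hag (LCond x0 a0 A B) (or_introl eq_refl)) as Ea.
  destruct Nat.eq_dec; [|congruence]. rewrite Ea in *. assumption.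
Qed.

Lemma invertible_Rand1 s x A B : invertible_suc s (LW x (And A B)) [] [LW x A].
Proof.
  apply invertible_suc_of_principal. suc_principal_intro.
  first_premise Hp σ σ (agree_refl σ (Γ ++ Δ)).
  eapply uder_perm; [eassumption | |]; mult_solve.
Qed.

Lemma invertible_Rand2 s x A B : invertible_suc s (LW x (And A B)) [] [LW x B].
Proof.
  apply invertible_suc_of_principal. suc_principal_intro.
  second_premise Hp σ σ (agree_refl σ (Γ ++ Δ)).
  eapply uder_perm; [eassumption | |]; mult_solve.
Qed.

Lemma invertible_Ror s x A B : invertible_suc s (LW x (Or A B)) [] [LW x A; LW x B].
Proof.
  apply invertible_suc_of_principal. suc_principal_intro.
  first_premise Hp σ σ (agree_refl σ (Γ ++ Δ)).
  eapply uder_perm; [eassumption | |]; mult_solve.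
Qed.

Lemma invertible_Rimp s x A B : invertible_suc s (LW x (Imp A B)) [LW x A] [LW x B].
Proof.
  apply invertible_suc_of_principal. suc_principal_intro.
  first_premise Hp σ σ (agree_refl σ (Γ ++ Δ)).
  eapply uder_perm; [eassumption | |]; mult_solve.
Qed.

Lemma invertible_Rall s a A y : invertible_suc s (LAll a A) [LIn y a] [LW y A].
Proof.
  apply invertible_suc_of_principal. suc_principal_intro.
  pose proof (agree_upd_w σ x y _ Hf) as Hag.
  first_premise Hp σ (upd_w σ x y) (agree_incl _ _ _ (Γ ++ Δ) Hag ltac:(incl_solve)).
  injection (Hag (LAll a0 A) (or_introl eq_refl)) as Ea.
  destruct Nat.eq_dec; [|congruence]. rewrite Ea in *. assumption.
Qed.

Lemma invertible_Rcond s x A B b : invertible_suc s (LW x (Cond A B))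
  [LN b x; LEx b A] [LCond x b A B].
Proof.
  apply invertible_suc_of_principal. suc_principal_intro.
  pose proof (agree_upd_n σ n b _ Hf) as Hag.
  first_premise Hp σ (upd_n σ n b) (agree_incl _ _ _ (Γ ++ Δ) Hag ltac:(incl_solve)).
  destruct Nat.eq_dec; [|congruence]. assumption.
Qed.

Definition never_principal_suc (F : lform) : Prop :=
  match F with LN _ _ | LIn _ _ | LSub _ _ | LW _ Bot => True | _ => False end.

Lemma invertible_never_principal s F : never_principal_suc F -> invertible_suc s F [] [].
Proof.
  intros HF. apply invertible_suc_of_principal.
  intros r Γ Δ σ F0 Hr Hps Hσ _ _ _.
  destruct F as [| | |? [] | | |]; try contradiction;
  suc_principal_rules Hr Hps Hσ.
Qed.

(** * Contraction *)

Fixpoint fsize (A : form) : nat :=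
  match A with
  | Atom _ | Bot => 1
  | And A B | Or A B | Imp A B => fsize A + fsize B + 1
  | Cond A B => fsize A + fsize B + 2
  end.

(* Calibrated so that inverting a rule, and each cut reduction, only produces
   lighter formulas: [x ⊩_c A | B] lies strictly between [c ⊩∃ A],
   [c ⊩∀ A → B] and [x : A > B]. *)
Definition weight (F : lform) : nat :=
  match F with
  | LN _ _ | LIn _ _ | LSub _ _ => 0
  | LW _ A => 3 * fsize A
  | LEx _ A | LAll _ A => 3 * fsize A + 1
  | LCond _ _ A B => 3 * (fsize A + fsize B) + 5
  end.

Lemma shrink_closed (C : lform -> Prop) (P : list lform -> Prop) :
  (forall X X', Permutation X X' -> P X -> P X') ->
  (forall x X, C x -> P (x :: x :: X) -> P (x :: X)) ->
  forall X X', P X -> incl X X' -> (forall x, mult X' x <= mult X x) ->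
  (forall x, mult X' x < mult X x -> C x) -> P X'.
Proof.
  intros Hperm Hcon X. induction X as [X IH] using (induction_ltof1 _ (@length lform)).
  intros X' HX Hincl Hle HC.
  destruct (Exists_dec (fun x => mult X' x < mult X x) X) as [Hex|Hno].
  { intros x. apply lt_dec. }
  - apply Exists_exists in Hex as [x [Hx Hlt]].
    assert (Hx' : 0 < mult X' x) by (apply count_occ_In, Hincl, Hx).
    destruct (perm_cons_of_in x X Hx) as [X1 HX1].
    assert (Hx1 : In x X1) by (apply (count_occ_In lform_eq_dec); mult_at x).
    destruct (perm_cons_of_in x X1 Hx1) as [X2 HX2].
    apply (IH (x :: X2)).
    + unfold ltof. rewrite (Permutation_length HX1). simpl.
      rewrite (Permutation_length HX2). simpl. lia.
    + apply Hcon; [apply HC, Hlt|]. apply (Hperm X); [rewrite HX1, HX2; reflexivity | exact HX].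
    + intros z [<-|Hz]; apply Hincl; [exact Hx|].
      rewrite HX1, HX2. right; right. exact Hz.
    + mult_solve.
    + intros z Hz. destruct (lform_eq_dec z x) as [->|Hne]; [apply HC, Hlt|].
      apply HC. mult_at z.
  - apply (Hperm X); [|exact HX].
    apply (Permutation_count_occ lform_eq_dec). intros z. specialize (Hle z).
    destruct (in_dec lform_eq_dec z X) as [Hz|Hz].
    + enough (~ mult X' z < mult X z) by lia.
      intros Hlt. apply Hno, Exists_exists. eauto.
    + apply (count_occ_not_In lform_eq_dec) in Hz. lia.
Qed.

Definition ant_contractions s F G D := forall G',
  (forall x, x <> F -> mult G' x = mult G x) -> 1 <= mult G' F <= mult G F -> uder s G' D.
Definition suc_contractions s F G D := forall D',
  (forall x, x <> F -> mult D' x = mult D x) -> 1 <= mult D' F <= mult D F -> uder s G D'.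

Definition contractible_ant s F := forall G D, uder s G D -> ant_contractions s F G D.
Definition contractible_suc s F := forall G D, uder s G D -> suc_contractions s F G D.

Lemma uder_shrink_ant s (C : lform -> Prop) G D G' : (forall F, C F -> contractible_ant s F) ->
  uder s G D -> incl G G' -> (forall x, mult G' x <= mult G x) ->
  (forall x, mult G' x < mult G x -> C x) -> uder s G' D.
Proof.
  intros HC. apply (shrink_closed C (fun X => uder s X D)).
  - intros X X' HX H. eapply uder_perm; [exact H | exact HX | reflexivity].
  - intros x X Hx H. apply (HC x Hx _ _ H); [mult_solve | mult_at x].
Qed.

Lemma uder_shrink_suc s (C : lform -> Prop) G D D' : (forall F, C F -> contractible_suc s F) ->
  uder s G D -> incl D D' -> (forall x, mult D' x <= mult D x) ->
  (forall x, mult D' x < mult D x -> C x) -> uder s G D'.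
Proof.
  intros HC. apply (shrink_closed C (fun Y => uder s G Y)).
  - intros Y Y' HY H. eapply uder_perm; [exact H | reflexivity | exact HY].
  - intros x Y Hx H. apply (HC x Hx _ _ H); [mult_solve | mult_at x].
Qed.

Lemma uder_contract_dup s Q R G D :
  (forall F, In F (Q ++ R) -> contractible_ant s F /\ contractible_suc s F) ->
  uder s (Q ++ Q ++ G) (R ++ R ++ D) -> uder s (Q ++ G) (R ++ D).
Proof.
  intros HC H.
  apply (uder_shrink_suc s (fun F => In F R) _ (R ++ R ++ D)).
  - intros F HF. apply HC, in_or_app. auto.
  - apply (uder_shrink_ant s (fun F => In F Q) (Q ++ Q ++ G)); [|exact H|incl_solve|mult_solve|].
    + intros F HF. apply HC, in_or_app. auto.
    + intros x Hx. apply (count_occ_In lform_eq_dec). mult_at x.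
  - incl_solve.
  - mult_solve.
  - intros x Hx. apply (count_occ_In lform_eq_dec). mult_at x.
Qed.

Definition keeps_pant (r : rinst) : Prop :=
  forall Q R, In (Q, R) (prems r) -> forall x, mult (pant r) x <= mult Q x.
Definition keeps_psuc (r : rinst) : Prop :=
  forall Q R, In (Q, R) (prems r) -> forall x, mult (psuc r) x <= mult R x.

Definition invertible_pant s (r : rinst) : Prop := exists F0, pant r = [F0] /\
  forall Q R, In (Q, R) (prems r) ->
    invertible_ant s F0 Q R /\ forall F, In F (Q ++ R) -> weight F < weight F0.
Definition invertible_psuc s (r : rinst) : Prop := exists F0, psuc r = [F0] /\
  forall Q R, In (Q, R) (prems r) ->
    invertible_suc s F0 Q R /\ forall F, In F (Q ++ R) -> weight F < weight F0.

Ltac lighter := let F := fresh in let HF := fresh in intros F HF; simpl in HF;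
  repeat match goal with H : _ \/ _ |- _ => destruct H end; try contradiction; subst; simpl; lia.

Lemma rule_keeps_or_inverts_pant s r : rule s r -> keeps_pant r \/ invertible_pant s r.
Proof.
  intros Hr; destruct Hr;
  try (left; intros Q R Hin; prem_cases Hin; mult_solve);
  right; eexists; (split; [reflexivity|]);
  intros Q R Hin; prem_cases Hin; (split; [|lighter]).
  - apply invertible_Land.
  - apply invertible_Lor1.
  - apply invertible_Lor2.
  - apply invertible_Limp1.
  - apply invertible_Limp2.
  - apply invertible_Lex.
  - apply invertible_Lbar.
Qed.

Lemma rule_keeps_or_inverts_psuc s r : rule s r -> keeps_psuc r \/ invertible_psuc s r.
Proof.
  intros Hr; destruct Hr;
  try (left; intros Q R Hin; prem_cases Hin; mult_solve);
  right; eexists; (split; [reflexivity|]);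
  intros Q R Hin; prem_cases Hin; (split; [|lighter]).
  - apply invertible_Rand1.
  - apply invertible_Rand2.
  - apply invertible_Ror.
  - apply invertible_Rimp.
  - apply invertible_Rall.
  - apply invertible_Rcond.
Qed.

Lemma hasC_hasN s : hasC s = true -> hasN s = true.
Proof. destruct s; simpl; congruence. Qed.

(* In the calculi with rule C the atom [x ∈ {x}] comes for free: N gives a
   fresh [a ∈ N(x)], C then [{x} ∈ N(x)], and Single [x ∈ {x}]. *)
Lemma uder_elim_self_singleton s x G D :
  hasC s = true -> uder s (LIn x (NS x) :: G) D -> uder s G D.
Proof.
  intros HC H. set (n := fresh_nvar (LIn x (NS x) :: G ++ D)).
  assert (Hn : nfresh n (LIn x (NS x) :: G ++ D)) by apply fresh_nvar_spec.
  apply uder_rule with (RInst [] [] [([LN (NV n) x], [])] (NEigen n)) G D;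
    [apply ri_N, hasC_hasN; auto | reflexivity | reflexivity
    | simpl; eapply nfresh_incl; [|exact Hn]; incl_solve |].
  intros Q R Hin. prem_cases Hin. simpl.
  apply uder_rule with (RInst [LN (NV n) x] []
    [([LN (NS x) x; LSub (NS x) (NV n); LN (NV n) x], [])] NoEigen) G D;
    [apply ri_C; auto | reflexivity | reflexivity | exact I |].
  intros Q R Hin. prem_cases Hin. simpl.
  apply uder_rule with (RInst [LN (NS x) x] [] [([LIn x (NS x); LN (NS x) x], [])] NoEigen)
    (LSub (NS x) (NV n) :: LN (NV n) x :: G) D;
    [apply ri_Single; auto | reflexivity | reflexivity | exact I |].
  intros Q R Hin. prem_cases Hin. simpl.
  eapply uder_perm;
    [apply (uder_weaken s _ _ [LN (NS x) x; LSub (NS x) (NV n); LN (NV n) x] [] H) | |];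
    mult_solve.
Qed.

(* A rule with [F] principal twice in the antecedent either has a single
   premiss with at least as many copies of [F], up to eliminable atoms [E]
   ([x ∈ {x}] for Repl), or, by the closure conditions on the calculi, an
   instance with one copy of [F] whose premisses lose as many copies. *)
Definition absorbs_pant s (r : rinst) (F : lform) : Prop :=
  exists Q E k, psuc r = [] /\ prems r = [(Q, [])] /\
    Permutation Q (E ++ repeat F k ++ pant r) /\
    forall G D, uder s (E ++ G) D -> uder s G D.

Definition contracted_pant s (r : rinst) (F : lform) : Prop :=
  exists r' j, rule s r' /\ psuc r' = psuc r /\ eigv r' = eigv r /\
    Permutation (pant r) (repeat F j ++ pant r') /\ mult (pant r') F = 1 /\
    forall Q' R', In (Q', R') (prems r') ->
      exists Q, In (Q, R') (prems r) /\ Permutation Q (repeat F j ++ Q') /\ In F Q'.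

Lemma contr_dedup F P Full : contr P Full -> In F P ->
  exists P1, Permutation P (repeat F (pred (mult P F)) ++ F :: P1) /\
             mult P1 F = 0 /\ contr (F :: P1) Full.
Proof.
  intros [Hi [R HR]] HF.
  assert (H1 : 0 < mult P F) by (apply count_occ_In; exact HF).
  destruct (perm_app_of_mult_le (repeat F (mult P F)) P) as [P1 HP1].
  { intros x. rewrite mult_repeat. destruct (lform_eq_dec F x); subst; lia. }
  assert (HP1F : mult P1 F = 0) by mult_at F.
  exists P1. split; [mult_solve|split; [exact HP1F|split]].
  - intros z Hz. destruct (lform_eq_dec F z) as [<-|Hne]; [left; auto|right].
    apply Hi, (Permutation_in _ HP1), in_app_or in Hz as [Hz|Hz]; auto.
    apply repeat_spec in Hz. congruence.
  - exists (repeat F (pred (mult P F)) ++ R). mult_solve.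
Qed.

Lemma contracted_of_contr s F P Full Ext e :
  (forall P', contr P' Full -> rule s (RInst P' [] [(Ext ++ P', [])] e)) ->
  contr P Full -> In F P -> contracted_pant s (RInst P [] [(Ext ++ P, [])] e) F.
Proof.
  intros Hrule Hc HF.
  destruct (contr_dedup F P Full Hc HF) as [P1 [HP1 [HP1F Hc1]]].
  exists (RInst (F :: P1) [] [(Ext ++ F :: P1, [])] e), (pred (mult P F)).
  split; [apply Hrule, Hc1|]. split; [reflexivity|]. split; [reflexivity|].
  split; [exact HP1|]. split; [simpl; destruct (lform_eq_dec F F); congruence|].
  intros Q' R' Hin. prem_cases Hin.
  exists (Ext ++ P). split; [left; reflexivity|]. split; [mult_solve|].
  apply in_or_app. right. left. reflexivity.
Qed.

Ltac absorbs_tac :=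
  left; first
  [ eexists _, [], 1; split; [reflexivity|split; [reflexivity|split; [simpl; mult_solve|]]];
    intros ? ? ?; assumption
  | match goal with |- context [LIn ?w (NS ?w)] =>
      eexists _, [LIn w (NS w)], 0;
      split; [reflexivity|split; [reflexivity|split; [simpl; mult_solve|]]];
      intros ? ?; apply uder_elim_self_singleton; assumption end ].

Ltac contracted_tac :=
  right; match goal with
  | Hc : contr ?P ?Full |- context [RInst ?P [] [(?a :: ?b :: ?P, [])] ?e] =>
      apply (contracted_of_contr _ _ P Full [a; b] e)
  | Hc : contr ?P ?Full |- context [RInst ?P [] [(?a :: ?P, [])] ?e] =>
      apply (contracted_of_contr _ _ P Full [a] e)
  end;
  [ intros ? ?; simpl; first [ solve [eapply ri_U1; eauto] | solve [eapply ri_U2; eauto]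
                             | solve [eapply ri_A1; eauto] ]
  | eassumption | apply (count_occ_In lform_eq_dec); lia ].

Lemma dup_principal_pant s r F : rule s r -> 2 <= mult (pant r) F ->
  absorbs_pant s r F \/ contracted_pant s r F.
Proof.
  intros Hr H2. destruct Hr; try destruct t; cbn [atI pant] in *; simpl in H2;
  repeat match type of H2 with context [lform_eq_dec ?a ?b] => destruct (lform_eq_dec a b) end;
  try lia; try congruence; subst;
  repeat match goal with H : ?C _ _ = ?C _ _ |- _ => injection H; clear H; intros; subst end;
  try contracted_tac;
  try match goal with |- context [RInst [LIn ?y (NS ?x); _] _ _ _] =>
    destruct (Nat.eq_dec x y); [subst|] end;
  absorbs_tac.
Qed.

Section Contraction.

Variables (s : calc) (F : lform).
Hypothesis lighter_contractible :
  forall F', weight F' < weight F -> contractible_ant s F' /\ contractible_suc s F'.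

Lemma contract_ant_in_context r Γ Δ G' : rule s r ->
  eigen_fresh (eigv r) (pant r ++ psuc r ++ Γ ++ Δ) ->
  (forall Q R, In (Q, R) (prems r) -> ant_contractions s F (Q ++ Γ) (R ++ Δ)) ->
  (forall x, x <> F -> mult G' x = mult (pant r ++ Γ) x) ->
  1 <= mult G' F < mult (pant r ++ Γ) F -> mult (pant r) F <= mult G' F ->
  uder s G' (psuc r ++ Δ).
Proof.
  intros Hr Hf IH Hc1 Hc2 Hm.
  destruct (perm_app_of_mult_le (pant r) G') as [Γ' HΓ']; [mult_solve|].
  assert (HΓΓ' : forall x, mult Γ' x <= mult Γ x) by mult_solve.
  apply uder_rule with r Γ' Δ; [exact Hr | exact HΓ' | reflexivity | |].
  { eapply eigen_fresh_incl; [|exact Hf].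
    pose proof (incl_of_mult_le _ _ HΓΓ'). incl_solve. }
  intros Q R Hin.
  destruct (rule_keeps_or_inverts_pant s r Hr) as [Hk | [F0 [Hpa Hinv]]].
  - pose proof (Hk Q R Hin) as HkQ. apply (IH Q R Hin); [mult_solve | mult_at F].
  - rewrite Hpa in *. destruct (lform_eq_dec F0 F) as [<- | Hne].
    + (* [F] remains in [Γ']: invert it in the contracted premiss, then
         contract the lighter formulas this duplicates. *)
      destruct (Hinv Q R Hin) as [Hi Hw].
      apply uder_contract_dup; [intros F' HF'; apply lighter_contractible, Hw, HF'|].
      apply Hi, (IH Q R Hin); [mult_solve | mult_at F0].
    + apply (IH Q R Hin); [mult_solve | mult_at F].
Qed.

Lemma contract_ant_principal r Γ Δ G' : rule s r ->
  eigen_fresh (eigv r) (pant r ++ psuc r ++ Γ ++ Δ) ->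
  (forall Q R, In (Q, R) (prems r) -> ant_contractions s F (Q ++ Γ) (R ++ Δ)) ->
  (forall x, x <> F -> mult G' x = mult (pant r ++ Γ) x) ->
  1 <= mult G' F < mult (pant r) F -> uder s G' (psuc r ++ Δ).
Proof.
  intros Hr Hf IH Hc1 Hc2.
  destruct (dup_principal_pant s r F Hr ltac:(lia))
    as [[Q [E [k [Hps [Hprems [HQ Helim]]]]]] | [r' [j [Hr' [Hps [Heg [Hpa [H1 Hpr]]]]]]]].
  - rewrite Hps. apply Helim, (IH Q []);
      [rewrite Hprems; left; reflexivity | mult_solve | mult_at F].
  - destruct (perm_app_of_mult_le (pant r') G') as [Γ' HΓ']; [mult_solve|].
    rewrite <- Hps. apply uder_rule with r' Γ' Δ; [exact Hr' | exact HΓ' | reflexivity | |].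
    + rewrite Heg, Hps. eapply eigen_fresh_incl; [|exact Hf].
      intros z Hz. apply (count_occ_In lform_eq_dec). apply (count_occ_In lform_eq_dec) in Hz.
      revert Hz. mult_at z.
    + intros Q' R' Hin'. destruct (Hpr Q' R' Hin') as [Q [HinQ [HQ HFQ']]].
      apply (count_occ_In lform_eq_dec) in HFQ'.
      apply (IH Q R' HinQ); [mult_solve | mult_at F].
Qed.

Lemma contract_suc_in_context r Γ Δ D' : rule s r ->
  eigen_fresh (eigv r) (pant r ++ psuc r ++ Γ ++ Δ) ->
  (forall Q R, In (Q, R) (prems r) -> suc_contractions s F (Q ++ Γ) (R ++ Δ)) ->
  (forall x, x <> F -> mult D' x = mult (psuc r ++ Δ) x) ->
  1 <= mult D' F < mult (psuc r ++ Δ) F -> uder s (pant r ++ Γ) D'.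
Proof.
  intros Hr Hf IH Hc1 Hc2.
  assert (Hm : mult (psuc r) F <= 1).
  { pose proof (psuc_length s r Hr). pose proof (count_occ_bound lform_eq_dec F (psuc r)). lia. }
  destruct (perm_app_of_mult_le (psuc r) D') as [Δ' HΔ']; [mult_solve|].
  assert (HΔΔ' : forall x, mult Δ' x <= mult Δ x) by mult_solve.
  apply uder_rule with r Γ Δ'; [exact Hr | reflexivity | exact HΔ' | |].
  { eapply eigen_fresh_incl; [|exact Hf].
    pose proof (incl_of_mult_le _ _ HΔΔ'). incl_solve. }
  intros Q R Hin.
  destruct (rule_keeps_or_inverts_psuc s r Hr) as [Hk | [F0 [Hps Hinv]]].
  - pose proof (Hk Q R Hin) as HkR. apply (IH Q R Hin); [mult_solve | mult_at F].
  - rewrite Hps in *. destruct (lform_eq_dec F0 F) as [<- | Hne].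
    + destruct (Hinv Q R Hin) as [Hi Hw].
      apply uder_contract_dup; [intros F' HF'; apply lighter_contractible, Hw, HF'|].
      apply Hi, (IH Q R Hin); [mult_solve | mult_at F0].
    + apply (IH Q R Hin); [mult_solve | mult_at F].
Qed.

Lemma contractible_step : contractible_ant s F /\ contractible_suc s F.
Proof.
  split; intros G D Hd; induction Hd as [r Γ Δ G D Hr HG HD Hf Hp IH].
  - intros G' Hc1 Hc2.
    destruct (Nat.eq_dec (mult G' F) (mult G F)) as [Heq|Hne].
    { eapply uder_perm; [apply uder_rule with r Γ Δ; eauto | mult_solve | reflexivity]. }
    eapply uder_perm; [| reflexivity | symmetry; exact HD].
    destruct (le_lt_dec (mult (pant r) F) (mult G' F)).
    + apply (contract_ant_in_context r Γ Δ); auto; [mult_solve | mult_at F].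
    + apply (contract_ant_principal r Γ Δ); auto; [mult_solve | mult_at F].
  - intros D' Hc1 Hc2.
    destruct (Nat.eq_dec (mult D' F) (mult D F)) as [Heq|Hne].
    { eapply uder_perm; [apply uder_rule with r Γ Δ; eauto | reflexivity | mult_solve]. }
    eapply uder_perm; [| symmetry; exact HG | reflexivity].
    apply (contract_suc_in_context r Γ Δ); auto; [mult_solve | mult_at F].
Qed.

End Contraction.

Lemma contractible s F : contractible_ant s F /\ contractible_suc s F.
Proof.
  induction F as [F IH] using (induction_ltof1 _ weight).
  apply contractible_step. exact IH.
Qed.

Lemma uder_shrink s G D G' D' : uder s G D ->
  incl G G' -> (forall x, mult G' x <= mult G x) ->
  incl D D' -> (forall x, mult D' x <= mult D x) -> uder s G' D'.
Proof.
  intros H HG HG' HD HD'.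
  apply (uder_shrink_suc s (fun _ => True) G' D); auto; [intros F _; apply contractible|].
  apply (uder_shrink_ant s (fun _ => True) G D); auto. intros F _; apply contractible.
Qed.

(** * Cut *)

Definition cut_admissible s F := forall G D G' D',
  uder s G (F :: D) -> uder s (F :: G') D' -> uder s (G ++ G') (D ++ D').

Definition cuts_below s n := forall F, weight F < n -> cut_admissible s F.

Lemma cut_at s F G D G' D' D0 G0 : cut_admissible s F ->
  uder s G D -> Permutation D (F :: D0) -> uder s G' D' -> Permutation G' (F :: G0) ->
  uder s (G ++ G0) (D0 ++ D').
Proof.
  intros Hcut HL HD HR HG. apply Hcut.
  - eapply uder_perm; [exact HL | reflexivity | exact HD].
  - eapply uder_perm; [exact HR | exact HG | reflexivity].
Qed.

Lemma cut_of_suc_principal s F G D G' D' :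
  suc_principal_case s F G' D' -> uder s G (F :: D) -> uder s (G ++ G') (D ++ D').
Proof.
  intros Hpc HL.
  eapply uder_perm; [apply (invertible_suc_of_principal s F G' D' Hpc _ _ HL) | |];
    apply Permutation_app_comm.
Qed.

Lemma cut_of_ant_principal s F G D G' D' :
  ant_principal_case s F G D -> uder s (F :: G') D' -> uder s (G ++ G') (D ++ D').
Proof. intros Hpc HR. apply (invertible_ant_of_principal s F G D Hpc _ _ HR). Qed.

Ltac shrink C :=
  apply (uder_shrink _ _ _ _ _ C); [incl_solve | mult_solve | incl_solve | mult_solve].

Lemma cut_never_principal s F : never_principal_suc F -> cut_admissible s F.
Proof.
  intros HF G D G' D' HL _. apply (invertible_never_principal s F HF) in HL.
  eapply uder_perm; [apply (uder_weaken s _ _ G' D' HL) | |]; apply Permutation_app_comm.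
Qed.

Lemma cut_Atom s x p : cut_admissible s (LW x (Atom p)).
Proof.
  intros G D G' D' HL HR.
  refine (cut_of_suc_principal s _ G D G' D' _ HL).
  suc_principal_intro.
  eapply uder_perm; [apply (uder_weaken s _ _ (map (lsub σ) Γ) (map (lsub σ) Δ) HR) | |];
    mult_solve.
Qed.

Lemma cut_And s x A B : cuts_below s (weight (LW x (And A B))) ->
  cut_admissible s (LW x (And A B)).
Proof.
  intros IH G D G' D' HL HR.
  pose proof (invertible_Rand1 s x A B _ _ HL) as L1.
  pose proof (invertible_Rand2 s x A B _ _ HL) as L2.
  pose proof (invertible_Land s x A B _ _ HR) as R12.
  pose proof (cut_at s (LW x A) _ _ _ _ D (LW x B :: G') (IH (LW x A) ltac:(simpl; lia))
                L1 (Permutation_refl _) R12 (Permutation_refl _)) as C1.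
  pose proof (cut_at s (LW x B) _ _ _ _ D (G ++ G') (IH (LW x B) ltac:(simpl; lia))
                L2 (Permutation_refl _) C1 ltac:(mult_solve)) as C2.
  shrink C2.
Qed.

Lemma cut_Or s x A B : cuts_below s (weight (LW x (Or A B))) ->
  cut_admissible s (LW x (Or A B)).
Proof.
  intros IH G D G' D' HL HR.
  pose proof (invertible_Ror s x A B _ _ HL) as L12.
  pose proof (invertible_Lor1 s x A B _ _ HR) as R1.
  pose proof (invertible_Lor2 s x A B _ _ HR) as R2.
  pose proof (cut_at s (LW x A) _ _ _ _ (LW x B :: D) G' (IH (LW x A) ltac:(simpl; lia))
                L12 (Permutation_refl _) R1 (Permutation_refl _)) as C1.
  pose proof (cut_at s (LW x B) _ _ _ _ (D ++ D') G' (IH (LW x B) ltac:(simpl; lia))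
                C1 ltac:(mult_solve) R2 (Permutation_refl _)) as C2.
  shrink C2.
Qed.

Lemma cut_Imp s x A B : cuts_below s (weight (LW x (Imp A B))) ->
  cut_admissible s (LW x (Imp A B)).
Proof.
  intros IH G D G' D' HL HR.
  pose proof (invertible_Rimp s x A B _ _ HL) as L1.
  pose proof (invertible_Limp1 s x A B _ _ HR) as R1.
  pose proof (invertible_Limp2 s x A B _ _ HR) as R2.
  pose proof (cut_at s (LW x A) _ _ _ _ D' G (IH (LW x A) ltac:(simpl; lia))
                R1 (Permutation_refl _) L1 (Permutation_refl _)) as C1.
  pose proof (cut_at s (LW x B) _ _ _ _ (D' ++ D) G' (IH (LW x B) ltac:(simpl; lia))
                C1 ltac:(mult_solve) R2 (Permutation_refl _)) as C2.
  shrink C2.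
Qed.

Lemma cut_Ex s a A : cuts_below s (weight (LEx a A)) -> cut_admissible s (LEx a A).
Proof.
  intros IH G D G' D' HL HR.
  refine (cut_of_suc_principal s _ G D G' D' _ HL).
  suc_principal_intro.
  pose proof (IHp _ _ (or_introl eq_refl) σ (LW x A :: Δ) ltac:(mult_solve) eq_refl) as P1.
  pose proof (invertible_Lex s (nsub σ a0) A (sub_w σ x) _ _ HR) as R1.
  simpl in P1, R1. set (y := sub_w σ x) in *.
  pose proof (cut_at s (LW y A) _ _ _ _ (D' ++ map (lsub σ) Δ) (LIn y (nsub σ a0) :: G')
                (IH (LW y A) ltac:(simpl; lia)) P1 ltac:(mult_solve) R1 (perm_swap _ _ _)) as C.
  shrink C.
Qed.

Lemma cut_All s a A : cuts_below s (weight (LAll a A)) -> cut_admissible s (LAll a A).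
Proof.
  intros IH G D G' D' HL HR.
  refine (cut_of_ant_principal s _ G D G' D' _ HR).
  ant_principal_intro.
  pose proof (IHp _ _ (or_introl eq_refl) σ (LW x A :: LIn x a0 :: Γ) ltac:(mult_solve) eq_refl)
    as P1.
  pose proof (invertible_Rall s (nsub σ a0) A (sub_w σ x) _ _ HL) as L1.
  simpl in P1, L1. set (y := sub_w σ x) in *. set (b := nsub σ a0) in *.
  pose proof (cut_at s (LW y A) _ _ _ _ D (G ++ LIn y b :: map (lsub σ) Γ)
                (IH (LW y A) ltac:(simpl; lia)) L1 (Permutation_refl _) P1 ltac:(mult_solve)) as C.
  shrink C.
Qed.

Lemma cut_Bar s x a A B : cuts_below s (weight (LCond x a A B)) ->
  cut_admissible s (LCond x a A B).
Proof.
  intros IH G D G' D' HL HR.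
  refine (cut_of_suc_principal s _ G D G' D' _ HL).
  suc_principal_intro.
  pose proof (IHp _ _ (or_introl eq_refl) σ (LEx c A :: Δ) ltac:(mult_solve) eq_refl) as P1.
  pose proof (IHp _ _ (or_intror (or_introl eq_refl)) σ (LAll c (Imp A B) :: Δ)
                ltac:(mult_solve) eq_refl) as P2.
  pose proof (invertible_Lbar s (sub_w σ x0) (nsub σ a0) A B (nsub σ c) _ _ HR) as R1.
  simpl in P1, P2, R1.
  set (x' := sub_w σ x0) in *. set (a' := nsub σ a0) in *. set (c' := nsub σ c) in *.
  pose proof (cut_at s (LEx c' A) _ _ _ _ (D' ++ map (lsub σ) Δ)
                (LN c' x' :: LSub c' a' :: LAll c' (Imp A B) :: G')
                (IH (LEx c' A) ltac:(simpl; lia)) P1 ltac:(mult_solve) R1 ltac:(mult_solve)) as C1.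
  pose proof (cut_at s (LAll c' (Imp A B)) _ _ _ _ (D' ++ map (lsub σ) Δ)
                ((G' ++ LN c' x' :: LSub c' a' :: map (lsub σ) Γ) ++ LN c' x' :: LSub c' a' :: G')
                (IH (LAll c' (Imp A B)) ltac:(simpl; lia))
                P2 ltac:(mult_solve) C1 ltac:(mult_solve))
    as C2.
  shrink C2.
Qed.

Lemma cut_Cond s x A B : cuts_below s (weight (LW x (Cond A B))) ->
  cut_admissible s (LW x (Cond A B)).
Proof.
  intros IH G D G' D' HL HR.
  refine (cut_of_ant_principal s _ G D G' D' _ HR).
  ant_principal_intro.
  pose proof (IHp _ _ (or_introl eq_refl) σ (LN a x0 :: Γ) ltac:(mult_solve) eq_refl) as P1.
  pose proof (IHp _ _ (or_intror (or_introl eq_refl)) σ (LCond x0 a A B :: LN a x0 :: Γ)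
                ltac:(mult_solve) eq_refl) as P2.
  pose proof (invertible_Rcond s (sub_w σ x0) A B (nsub σ a) _ _ HL) as L1.
  simpl in P1, P2, L1. set (x' := sub_w σ x0) in *. set (b := nsub σ a) in *.
  pose proof (cut_at s (LEx b A) _ _ _ _ (D ++ map (lsub σ) Δ) (LN b x' :: G)
                (IH (LEx b A) ltac:(simpl; lia)) P1 ltac:(mult_solve) L1 ltac:(mult_solve)) as C1.
  pose proof (cut_at s (LCond x' b A B) _ _ _ _ ((D ++ map (lsub σ) Δ) ++ D)
                (G ++ LN b x' :: map (lsub σ) Γ)
                (IH (LCond x' b A B) ltac:(simpl; lia)) C1 ltac:(mult_solve) P2 ltac:(mult_solve))
    as C2.
  shrink C2.
Qed.

Lemma uder_cut s F : cut_admissible s F.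
Proof.
  induction F as [F IH] using (induction_ltof1 _ weight).
  assert (Hbelow : cuts_below s (weight F)) by exact IH.
  destruct F as [a x | x a | a b | x [p | | A B | A B | A B | A B] | a A | a A | x a A B].
  - apply cut_never_principal. exact I.
  - apply cut_never_principal. exact I.
  - apply cut_never_principal. exact I.
  - apply cut_Atom.
  - apply cut_never_principal. exact I.
  - apply cut_And, Hbelow.
  - apply cut_Or, Hbelow.
  - apply cut_Imp, Hbelow.
  - apply cut_Cond, Hbelow.
  - apply cut_Ex, Hbelow.
  - apply cut_All, Hbelow.
  - apply cut_Bar, Hbelow.
Qed.

Theorem mainTheorem12 :
  forall (s : calc) (F : lform) (G D G' D' : list lform),
    der s G (F :: D) -> der s (F :: G') D' -> der s (G ++ G') (D ++ D').
Proof.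
  intros s F G D G' D' HL HR.
  apply uder_der, (uder_cut s F); apply der_uder; assumption.
Qed.
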